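(* An $S$-claw $\mathcal{F}=(f_s:I_s\to[n]\mid s\in S)$ in $\Delta$ is strongly biCartesian if and only if it is compatible.
   Context: $\Delta$: simplex category of nonempty finite linear orders $[n]$ and weakly monotone maps. An $S$-claw on $[n]$ ($S$ finite) is a family of morphisms $f_s:I_s\to[n]$. It is strongly biCartesian if it extends to an $S$-cube $Q:\mathcal{P}(S)^{\mathrm{op}}\to\Delta$ ($\mathcal{P}(S)$ the subset poset) with $Q(\emptyset)=[n]$, $Q(\{s\})\to Q(\emptyset)$ equal to $f_s$, such that every square $Q(T\cup\{s,s'\})\to Q(T\cup\{s\}),Q(T\cup\{s'\})\to Q(T)$ ($s\neq s'\notin T$) is both a pullback and a pushout in $\Delta$. It is compatible if (BC1) for each $i\in[n]$ at most one $s$ has $f_s^{-1}\{i\}$ not a singleton, and (BC2) for each $0<i\le n$ at most one $s$ has $\{i-1,i\}\not\subseteq f_s(I_s)$. *)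

(* The simplex category Delta, encoded concretely:
   the object [k] = {0,...,k} is represented by the natural number k;
   a morphism [m] -> [n] is a function g : nat -> nat that is weakly
   monotone on {0..m} and maps {0..m} into {0..n}; two morphisms [m] -> [n]
   are equal iff they agree on {0..m}. *)
From mathcomp Require Import all_boot.
Set Implicit Arguments. Unset Strict Implicit. Unset Printing Implicit Defensive.

Definition is_hom (m n : nat) (g : nat -> nat) : Prop :=
  (forall i, i <= m -> g i <= n) /\
  (forall i j, i <= j -> j <= m -> g i <= g j).

Definition eqon (m : nat) (g h : nat -> nat) : Prop :=
  forall i, i <= m -> g i = h i.

(* Square   A --a--> B
            |        |
            b        c
            v        v
            C --d--> D     in Delta (a,b,c,d assumed morphisms). *)
Definition commutes (A : nat) (a b c d : nat -> nat) : Prop :=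
  eqon A (c \o a) (d \o b).

Definition is_pullback (A B C D : nat) (a b c d : nat -> nat) : Prop :=
  commutes A a b c d /\
  forall (X : nat) (u v : nat -> nat),
    is_hom X B u -> is_hom X C v -> eqon X (c \o u) (d \o v) ->
    exists w, [/\ is_hom X A w, eqon X (a \o w) u, eqon X (b \o w) v &
      forall w', is_hom X A w' -> eqon X (a \o w') u -> eqon X (b \o w') v ->
        eqon X w w'].

Definition is_pushout (A B C D : nat) (a b c d : nat -> nat) : Prop :=
  commutes A a b c d /\
  forall (X : nat) (u v : nat -> nat),
    is_hom B X u -> is_hom C X v -> eqon A (u \o a) (v \o b) ->
    exists w, [/\ is_hom D X w, eqon B (w \o c) u, eqon C (w \o d) v &
      forall w', is_hom D X w' -> eqon B (w' \o c) u -> eqon C (w' \o d) v ->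
        eqon D w w'].

(* An S-cube Q : P(S)^op -> Delta: object Q(T) = [dim T], and for T \subset T'
   the morphism Q(T') -> Q(T) is qmap T T'. *)
Definition is_cube (S : finType) (dim : {set S} -> nat)
    (qmap : {set S} -> {set S} -> nat -> nat) : Prop :=
  [/\ forall T T' : {set S}, T \subset T' -> is_hom (dim T') (dim T) (qmap T T'),
      forall T : {set S}, eqon (dim T) (qmap T T) id &
      forall T T' T'' : {set S}, T \subset T' -> T' \subset T'' ->
        eqon (dim T'') (qmap T T'') (qmap T T' \o qmap T' T'')].

Definition cube_biCartesian (S : finType) (dim : {set S} -> nat)
    (qmap : {set S} -> {set S} -> nat -> nat) : Prop :=
  forall (T : {set S}) (s s' : S), s != s' -> s \notin T -> s' \notin T ->
    let A := T :|: [set s; s'] in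
    let B := s |: T in
    let C := s' |: T in
    is_pullback (dim A) (dim B) (dim C) (dim T)
      (qmap B A) (qmap C A) (qmap T B) (qmap T C) /\
    is_pushout (dim A) (dim B) (dim C) (dim T)
      (qmap B A) (qmap C A) (qmap T B) (qmap T C).

Definition is_claw (S : finType) (n : nat) (m : S -> nat) (f : S -> nat -> nat)
  : Prop := forall s, is_hom (m s) n (f s).

Definition strongly_biCartesian (S : finType) (n : nat) (m : S -> nat)
    (f : S -> nat -> nat) : Prop :=
  exists (dim : {set S} -> nat) (qmap : {set S} -> {set S} -> nat -> nat),
    [/\ is_cube dim qmap, cube_biCartesian dim qmap,
        dim set0 = n,
        forall s, dim [set s] = m s
        & forall s, eqon (m s) (qmap set0 [set s]) (f s)].

Definition fibre_card (S : finType) (m : S -> nat) (f : S -> nat -> nat)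
    (s : S) (i : nat) : nat :=
  count (fun j => f s j == i) (iota 0 (m s).+1).

Definition in_image (S : finType) (m : S -> nat) (f : S -> nat -> nat)
    (s : S) (i : nat) : bool :=
  has (fun j => f s j == i) (iota 0 (m s).+1).

Definition compatible (S : finType) (n : nat) (m : S -> nat)
    (f : S -> nat -> nat) : Prop :=
  (* (BC1) *)
  (forall i, i <= n -> forall s s',
     fibre_card m f s i != 1 -> fibre_card m f s' i != 1 -> s = s') /\
  (* (BC2) *)
  (forall i, 0 < i <= n -> forall s s',
     ~~ (in_image m f s i.-1 && in_image m f s i) ->
     ~~ (in_image m f s' i.-1 && in_image m f s' i) -> s = s').

From mathcomp Require Import all_boot zify.
Set Implicit Arguments. Unset Strict Implicit. Unset Printing Implicit Defensive.

(* Under (BC1) the fibre product over [n] of the maps f t, t in T, is a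
   chain: its block over i has prod_(t in T) #|f t^-1 i| elements, and the
   blocks follow each other in the order of [n].  These chains, with the maps
   that keep the block and clamp the position inside it, form the cube.  Over
   each i one leg of every square of the cube is an identity, again by (BC1),
   so the square is a pullback; a cocone glues block by block into a map out of
   Q(T), and (BC2) supplies, at each switch between the two legs, a point of
   Q(T u {s, s'}) through which the gluing is seen to be monotone.
   Conversely, maps from [0] into the pullback of f s and f s', and threshold
   maps from their pushout to [1], detect every failure of (BC1) and (BC2). *)


Lemma find_iota (a : pred nat) L i :
  i < L -> a i -> (forall j, j < i -> ~~ a j) -> find a (iota 0 L) = i.
Proof.
move=> iL ai below.
have has_a : has a (iota 0 L) by apply/hasP; exists i; rewrite ?mem_iota.
have := has_a; rewrite has_find size_iota => found_L.
have := nth_find 0 has_a; rewrite nth_iota // add0n => a_found.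
case: (ltngtP (find a (iota 0 L)) i) => [/below|/(before_find 0)|] //.
  by rewrite a_found.
by rewrite nth_iota // add0n ai.
Qed.

Lemma minn_pred_lt p K : 0 < K -> minn p K.-1 < K.
Proof. by move=> K_gt0; rewrite gtn_min ltn_predL K_gt0 orbT. Qed.

Lemma minn_pred_pullback t c r r' : r < t -> r' < c * t ->
  minn r t.-1 = minn r' t.-1 ->
  [/\ maxn r r' < c * t, minn (maxn r r') t.-1 = r, minn (maxn r r') (c * t).-1 = r' &
      forall p, p < c * t -> minn p t.-1 = r -> minn p (c * t).-1 = r' -> p = maxn r r'].
Proof.
move=> lt_r lt_r' eq_min.
have le_t : t <= c * t by case: c lt_r' => [|c]; rewrite ?mul0n // mulSn leq_addr.
have -> : maxn r r' = r' by apply/maxn_idPr; lia.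
by split=> *; lia.
Qed.

Lemma count_ltnS (g : nat -> nat) i s :
  count (fun j => g j < i.+1) s =
  count (fun j => g j < i) s + count (fun j => g j == i) s.
Proof.
elim: s => //= x s ->; rewrite ltnS leq_eqVlt.
by case: ltngtP => _ //=; rewrite ?add1n ?addSn ?addnS.
Qed.

Lemma count_mono_rank (g : nat -> nat) M k :
  (forall i j, i <= j -> j <= M -> g i <= g j) -> k <= M ->
  count (fun j => g j < g k) (iota 0 M.+1) <= k <
  count (fun j => g j < (g k).+1) (iota 0 M.+1).
Proof.
move=> mono_g le_kM.
have split_at i : i <= M.+1 -> iota 0 M.+1 = iota 0 i ++ iota i (M.+1 - i).
  by move=> le_iM; rewrite -iotaD subnKC.
apply/andP; split.
- rewrite (split_at k (leqW le_kM)) count_cat.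
  rewrite (@eq_in_count _ _ pred0 (iota k _)) => [|j]; last first.
    by rewrite mem_iota => /andP[le_kj lt_j] /=; rewrite ltnNge mono_g //; lia.
  by rewrite count_pred0 addn0 (leq_trans (count_size _ _)) ?size_iota.
- rewrite (split_at k.+1 le_kM) count_cat.
  rewrite (@eq_in_count _ _ predT (iota 0 k.+1)) => [|j]; last first.
    by rewrite mem_iota => /andP[_ lt_j] /=; rewrite ltnS mono_g //; lia.
  by rewrite count_predT size_iota leq_addr.
Qed.

(* For [N : nat -> nat], [[lex_dim N]] is the chain of pairs [(i, r)] with
   [i <= n] and [r < N i] in lexicographic order: [(i, r)] sits at [pos N i r],
   and [block], [offset] recover [i], [r].  When every [N i] is [0] the chain is
   empty but [lex_dim N] is still [0], hence the positivity premise of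
   [lex_posP].  [lex_clamp N' N] sends [(i, r)] to [(i, minn r (N' i).-1)]. *)
Section LexChain.
Variable n : nat.
Implicit Types (N : nat -> nat) (i r k : nat).

Definition block_start N i := \sum_(j < i) N j.

Definition pos N i r := block_start N i + r.

Definition block N k := find (fun i => k < block_start N i.+1) (iota 0 n.+1).

Definition offset N k := k - block_start N (block N k).

Definition lex_dim N := (block_start N n.+1).-1.

Definition lex_clamp N' N k :=
  pos N' (block N k) (minn (offset N k) (N' (block N k)).-1).

Lemma block_start_const1 i : block_start (fun _ => 1) i = i.
Proof. by rewrite /block_start sum_nat_const card_ord muln1. Qed.

Lemma block_startS N i : block_start N i.+1 = block_start N i + N i.
Proof. by rewrite /block_start big_ord_recr. Qed.

Lemma leq_block_start N : {homo block_start N : i j / i <= j}.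
Proof. by apply: homo_leq => // [|i]; [apply: leq_trans|rewrite block_startS leq_addr]. Qed.

Lemma pos_lt N i r : r < N i -> pos N i r < block_start N i.+1.
Proof. by rewrite /pos block_startS ltn_add2l. Qed.

Lemma block_eq N i k :
  i <= n -> block_start N i <= k < block_start N i.+1 -> block N k = i.
Proof.
move=> le_in /andP[ge_k lt_k]; apply: find_iota => // j lt_ji.
by rewrite -leqNgt (leq_trans (leq_block_start N lt_ji)).
Qed.

Lemma block_pos N i r : i <= n -> r < N i -> block N (pos N i r) = i.
Proof. by move=> le_in lt_r; rewrite (block_eq le_in) // pos_lt ?leq_addr. Qed.

Lemma offset_pos N i r : i <= n -> r < N i -> offset N (pos N i r) = r.
Proof. by move=> le_in lt_r; rewrite /offset block_pos // /pos addKn. Qed.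

Lemma pos_le_dim N i r : i <= n -> r < N i -> pos N i r <= lex_dim N.
Proof.
move=> le_in /pos_lt lt_pos.
have lt_total := leq_trans lt_pos (leq_block_start N (le_in : i < n.+1)).
by rewrite /lex_dim -ltnS prednK // (leq_ltn_trans _ lt_total).
Qed.

Lemma block_start_cover N L k : k < block_start N L ->
  exists2 i, i < L & block_start N i <= k < block_start N i.+1.
Proof.
elim: L => [|L IH]; first by rewrite /block_start big_ord0.
case: (ltnP k (block_start N L)) => [/IH[i lt_iL k_in] _|ge_k lt_k].
  by exists i => //; apply: ltnW.
by exists L => //; apply/andP.
Qed.

Lemma lex_posP N k : 0 < block_start N n.+1 -> k <= lex_dim N ->
  exists i r, [/\ i <= n, r < N i & k = pos N i r].
Proof.
rewrite /lex_dim => total_gt0; rewrite -ltnS prednK //.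
case/block_start_cover => i; rewrite ltnS => le_in /andP[ge_k lt_k].
exists i, (k - block_start N i); rewrite /pos subnKC //; split => //.
by rewrite -(ltn_add2l (block_start N i)) subnKC // -block_startS.
Qed.

Lemma lt_pos_block N i r i' r' : i < i' -> r < N i -> pos N i r < pos N i' r'.
Proof.
move=> lt_ii' /pos_lt lt_pos.
exact: leq_trans lt_pos (leq_trans (leq_block_start N lt_ii') (leq_addr _ _)).
Qed.

Lemma leq_pos N i r i' r' : r < N i -> r' < N i' ->
  (pos N i r <= pos N i' r') = (i < i') || (i == i') && (r <= r').
Proof.
move=> lt_r lt_r'; case: ltngtP => [lt_ii'|lt_i'i|<-] /=.
- exact/ltnW/lt_pos_block.
- by apply/negbTE; rewrite -ltnNge lt_pos_block.
- by rewrite leq_add2l.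
Qed.

Lemma pos_inj N i r i' r' : r < N i -> r' < N i' ->
  pos N i r = pos N i' r' -> i = i' /\ r = r'.
Proof.
move=> lt_r lt_r' eq_pos.
have := eq_leq eq_pos; have := eq_leq (esym eq_pos).
rewrite !leq_pos //; case: ltngtP => //= <- le_r le_r'.
by split => //; apply/eqP; rewrite eqn_leq le_r le_r'.
Qed.

Lemma pos_succ_gap N i r i' r' j : r < N i ->
  pos N i' r' = (pos N i r).+1 -> i < j < i' -> N j = 0.
Proof.
move=> /pos_lt lt_pos eq_succ /andP[lt_ij lt_ji'].
have := leq_block_start N lt_ij; have := leq_block_start N lt_ji'.
have := block_startS N j; move: eq_succ lt_pos; rewrite /pos; lia.
Qed.

Lemma lex_clamp_pos N' N i r : i <= n -> r < N i ->
  lex_clamp N' N (pos N i r) = pos N' i (minn r (N' i).-1).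
Proof. by move=> le_in lt_r; rewrite /lex_clamp block_pos ?offset_pos. Qed.

End LexChain.

Definition hits M (g : nat -> nat) k := has (fun x => g x == k) (iota 0 M.+1).

Definition fibre_size M (g : nat -> nat) k := count (fun x => g x == k) (iota 0 M.+1).

Lemma hitsP M g k : reflect (exists2 x, x <= M & g x = k) (hits M g k).
Proof.
apply: (iffP hasP) => [[x]|[x le_xM /eqP]]; last by exists x; rewrite // mem_iota.
by rewrite mem_iota ltnS => /andP[_ le_xM] /eqP; exists x.
Qed.

Lemma hitsPn M g k x : ~~ hits M g k -> x <= M -> g x != k.
Proof. by move=> /hitsP miss le_xM; apply/eqP => gx; apply: miss; exists x. Qed.

Lemma hits_fibre_size M g k : hits M g k = (0 < fibre_size M g k).
Proof. exact: has_count. Qed.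

Lemma fibre_size_gt1 M g k : 1 < fibre_size M g k ->
  exists x x', [/\ x < x', x' <= M, g x = k & g x' = k].
Proof.
rewrite /fibre_size; elim: M => [|M IH]; first by rewrite /= addn0; case: eqP.
rewrite -[M.+2]addn1 iotaD count_cat add0n [count _ [:: _]]/= addn0.
case: (ltnP 1 (count (fun x => g x == k) (iota 0 M.+1))) => [lt1 _|le1].
  have [x [x' [lt_x le_x' gx gx']]] := IH lt1.
  by exists x, x'; split; rewrite // ltnW.
case: eqP => [gM|_]; last by rewrite addn0 ltnNge le1.
rewrite addn1 ltnS -has_count => /hitsP[x le_xM gx].
by exists x, M.+1.
Qed.

Lemma is_hom_step M X (g : nat -> nat) : (forall x, x <= M -> g x <= X) ->
  (forall k, k < M -> g k <= g k.+1) -> is_hom M X g.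
Proof.
move=> bound step; split=> // i j le_ij le_jM.
apply: (@homo_leq_in nat [pred k | k <= M] g leq) => //=.
- exact: leq_trans.
- by move=> x y le_xM le_yM z /andP[_ /ltnW/leq_trans]; apply.
- by move=> k _; apply: step.
- exact: leq_trans le_ij le_jM.
Qed.

Lemma is_hom_const M X x : x <= X -> is_hom M X (fun _ => x).
Proof. by split. Qed.

Lemma is_hom_threshold M (g : nat -> nat) k :
  (forall i j, i <= j -> j <= M -> g i <= g j) -> is_hom M 1 (fun x => k <= g x).
Proof.
move=> mono_g; split=> [i _|i j le_ij le_jM]; first exact: leq_b1.
by case: (leqP k (g i)) => //= le_k; rewrite (leq_trans le_k (mono_g _ _ le_ij le_jM)).
Qed.

Lemma pullback_point P M1 M2 n a b (f1 f2 : nat -> nat) x y :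
  is_pullback P M1 M2 n a b f1 f2 -> x <= M1 -> y <= M2 -> f1 x = f2 y ->
  exists2 p, p <= P & a p = x /\ b p = y.
Proof.
case=> _ /(_ 0 (fun _ => x) (fun _ => y)) univ le_xM le_yM fxy.
have [|p [[/(_ 0 (leqnn 0)) le_pP _] /(_ 0 (leqnn 0)) ap /(_ 0 (leqnn 0)) bp _]] :=
  univ (is_hom_const _ le_xM) (is_hom_const _ le_yM); first by move=> *; apply: fxy.
by exists (p 0).
Qed.

Section BiCartesianPair.
Variables (n P M1 M2 : nat) (a b f1 f2 : nat -> nat).
Hypotheses (hom_f1 : is_hom M1 n f1) (hom_f2 : is_hom M2 n f2).
Hypotheses (hom_a : is_hom P M1 a) (hom_b : is_hom P M2 b).
Hypothesis pullback : is_pullback P M1 M2 n a b f1 f2.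
Hypothesis pushout : is_pushout P M1 M2 n a b f1 f2.

(* The thresholds [k <= _] and [k < _] on [n] both glue the thresholds at [k]
   on [f1] and [f2]; uniqueness of the gluing tells them apart only at [k]. *)
Lemma pushout_hits k : k <= n -> hits M1 f1 k || hits M2 f2 k.
Proof.
move=> le_kn; apply/contraT => /norP[miss1 miss2].
have [com /(_ 1 (fun x => k <= f1 x) (fun y => k <= f2 y))] := pushout.
case=> [||p le_pP|w [_ _ _ w_unique]].
- exact: is_hom_threshold (proj2 hom_f1).
- exact: is_hom_threshold (proj2 hom_f2).
- by have /= -> := com p le_pP.
have le_thr : is_hom n 1 (fun j => k <= j) by apply: is_hom_threshold.
have lt_thr : is_hom n 1 (fun j => k < j) by apply: is_hom_threshold.
have := w_unique _ le_thr (fun _ _ => erefl) (fun _ _ => erefl) k le_kn.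
have strict M g : ~~ hits M g k ->
    eqon M ((fun j => k < j) \o g) (fun x => k <= g x).
  by move=> miss x le_xM /=; rewrite ltn_neqAle eq_sym (hitsPn miss le_xM).
have := w_unique _ lt_thr (strict _ _ miss1) (strict _ _ miss2).
by move=> /(_ k le_kn) -> /=; rewrite ltnn leqnn.
Qed.

(* The points [(x, y')] and [(x', y)] of the pullback cannot be compared. *)
Lemma pullback_fibre_size k :
  1 < fibre_size M1 f1 k -> 1 < fibre_size M2 f2 k -> False.
Proof.
case/fibre_size_gt1 => x [x' [lt_xx' le_x'M f1x f1x']].
case/fibre_size_gt1 => y [y' [lt_yy' le_y'M f2y f2y']].
have le_xM := leq_trans (ltnW lt_xx') le_x'M.
have le_yM := leq_trans (ltnW lt_yy') le_y'M.
have [p le_pP [ap bp]] := pullback_point pullback le_xM le_y'M (etrans f1x (esym f2y')).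
have [p' le_p'P [ap' bp']] := pullback_point pullback le_x'M le_yM (etrans f1x' (esym f2y)).
case: (leqP p p') => [le_pp'|/ltnW le_p'p].
- by have := proj2 hom_b _ _ le_pp' le_p'P; rewrite bp bp' leqNgt lt_yy'.
- by have := proj2 hom_a _ _ le_p'p le_pP; rewrite ap ap' leqNgt lt_xx'.
Qed.

(* With [y < y'] in the fibre of [f2] over [k], the maps [k < f1 _] and
   [y' <= _] agree on [P], yet no map on [[n]] restricts along [f2] to the
   second one. *)
Lemma pushout_fibre_size k :
  k <= n -> ~~ hits M1 f1 k -> fibre_size M2 f2 k <= 1.
Proof.
move=> le_kn miss1; rewrite leqNgt; apply/negP.
case/fibre_size_gt1 => y [y' [lt_yy' le_y'M f2y f2y']].
have [com /(_ 1 (fun x => k < f1 x) (fun z => y' <= z))] := pushout.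
case=> [||p le_pP|w [_ _ glue2 _]].
- exact: is_hom_threshold (proj2 hom_f1).
- exact: is_hom_threshold.
- have le_bp := proj1 hom_b p le_pP.
  have /= com_p := com p le_pP.
  have := hitsPn miss1 (proj1 hom_a p le_pP); rewrite /= com_p => neq_k.
  have mono_f2 := proj2 hom_f2.
  case: (ltngtP k (f2 (b p))) neq_k => // [lt_k|gt_k] _; case: leqP => //.
  + by move/ltnW/(mono_f2 _ _)/(_ le_y'M); rewrite f2y' leqNgt lt_k.
  + by move/(mono_f2 _ _)/(_ le_bp); rewrite f2y' leqNgt gt_k.
have := glue2 y (leq_trans (ltnW lt_yy') le_y'M); have := glue2 y' le_y'M.
by rewrite /= f2y f2y' leqnn leqNgt lt_yy' => ->.
Qed.

(* The maps [i < f1 _] and [i.-1 <= f2 _] agree on [P] as no common value of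
   [f1 \o a] and [f2 \o b] is [i.-1] or [i]; a gluing would be [1] at [i.-1]
   and [0] at [i]. *)
Lemma pushout_no_gap i :
  0 < i <= n -> ~~ hits M1 f1 i.-1 -> ~~ hits M2 f2 i -> False.
Proof.
case/andP=> gt_i0 le_in miss1 miss2.
have le_in' := leq_trans (leq_pred i) le_in.
have /hitsP[x le_xM f1x] : hits M1 f1 i.
  by have := pushout_hits le_in; rewrite (negbTE miss2) orbF.
have /hitsP[y le_yM f2y] : hits M2 f2 i.-1.
  by have := pushout_hits le_in'; rewrite (negbTE miss1).
have [com /(_ 1 (fun x => i < f1 x) (fun y => i.-1 <= f2 y))] := pushout.
case=> [||p le_pP|w [[_ mono_w] glue1 glue2 _]].
- exact: is_hom_threshold (proj2 hom_f1).
- exact: is_hom_threshold (proj2 hom_f2).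
- have /= com_p := com p le_pP.
  have := hitsPn miss1 (proj1 hom_a p le_pP); have := hitsPn miss2 (proj1 hom_b p le_pP).
  rewrite /= com_p; move: (f2 (b p)) => K /eqP neq_i /eqP neq_i1.
  by congr nat_of_bool; apply/idP/idP; lia.
have /= w_f1x := glue1 x le_xM; have /= w_f2y := glue2 y le_yM.
have := mono_w _ _ (leq_pred i) le_in.
by rewrite -{1}f2y -f1x w_f1x w_f2y f1x f2y ltnn leqnn.
Qed.

End BiCartesianPair.

Lemma is_pullback_eqon A B C D a b c d c' d' :
  is_hom A B a -> is_hom A C b -> eqon B c c' -> eqon C d d' ->
  is_pullback A B C D a b c d -> is_pullback A B C D a b c' d'.
Proof.
move=> [hom_a _] [hom_b _] eq_c eq_d [com univ]; split.
  by move=> p le_pA /=; rewrite -eq_c ?hom_a // -eq_d ?hom_b //; apply: com.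
move=> X u v hom_u hom_v com_uv; apply: univ => // x le_xX /=.
by rewrite eq_c ?(proj1 hom_u) // eq_d ?(proj1 hom_v) //; apply: com_uv.
Qed.

Lemma is_pushout_eqon A B C D a b c d c' d' :
  is_hom A B a -> is_hom A C b -> eqon B c c' -> eqon C d d' ->
  is_pushout A B C D a b c d -> is_pushout A B C D a b c' d'.
Proof.
move=> [hom_a _] [hom_b _] eq_c eq_d [com univ]; split.
  by move=> p le_pA /=; rewrite -eq_c ?hom_a // -eq_d ?hom_b //; apply: com.
move=> X u v hom_u hom_v com_uv.
have [w [hom_w wc wd w_unique]] := univ X u v hom_u hom_v com_uv.
exists w; split=> // [x le_xB|x le_xC|w' hom_w' w'c w'd] /=.
- by rewrite -eq_c //; apply: wc.
- by rewrite -eq_d //; apply: wd.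
- apply: w_unique => // x le_x /=; first by rewrite eq_c //; apply: w'c.
  by rewrite eq_d //; apply: w'd.
Qed.

Lemma fibre_cardE (S : finType) (m : S -> nat) f s i :
  fibre_card m f s i = fibre_size (m s) (f s) i.
Proof. by []. Qed.

Lemma in_imageE (S : finType) (m : S -> nat) f s i :
  in_image m f s i = hits (m s) (f s) i.
Proof. by []. Qed.

Section StronglyBiCartesianIsCompatible.
Variables (S : finType) (n : nat) (m : S -> nat) (f : S -> nat -> nat).
Hypotheses (claw : is_claw n m f) (biCart : strongly_biCartesian n m f).

Lemma strongly_biCartesian_pair s s' : s != s' ->
  exists P a b, [/\ is_hom P (m s) a, is_hom P (m s') b,
    is_pullback P (m s) (m s') n a b (f s) (f s') &
    is_pushout P (m s) (m s') n a b (f s) (f s')].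
Proof.
move=> neq_ss'; have [dim [qmap [[hom_q _ _] bic dim0 dim1 q_f]]] := biCart.
have [] := bic set0 s s' neq_ss'; rewrite ?inE //.
rewrite /= !setU0 set0U dim0 !dim1 => pb po.
have hom_a : is_hom (dim [set s; s']) (m s) (qmap [set s] [set s; s']).
  by rewrite -dim1; apply: hom_q; rewrite subsetUl.
have hom_b : is_hom (dim [set s; s']) (m s') (qmap [set s'] [set s; s']).
  by rewrite -dim1; apply: hom_q; rewrite subsetUr.
exists (dim [set s; s']), (qmap [set s] [set s; s']), (qmap [set s'] [set s; s']).
split=> //; [exact: is_pullback_eqon pb|exact: is_pushout_eqon po].
Qed.

Lemma strongly_biCartesian_BC1 i : i <= n -> forall s s',
  fibre_card m f s i != 1 -> fibre_card m f s' i != 1 -> s = s'.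
Proof.
move=> le_in s s'; rewrite !fibre_cardE => ns1 ns'1.
case: (eqVneq s s') => // neq_ss'; exfalso.
have neq_s's : s' != s by rewrite eq_sym.
have one_sided t t' : t != t' ->
    fibre_size (m t) (f t) i = 0 -> fibre_size (m t') (f t') i <= 1.
  move=> neq /eqP; rewrite -leqn0 leqNgt -hits_fibre_size => miss.
  have [P [a [b [hom_a hom_b _ po]]]] := strongly_biCartesian_pair neq.
  exact (pushout_fibre_size (claw t) (claw t') hom_a hom_b po le_in miss).
have [P [a [b [hom_a hom_b pb po]]]] := strongly_biCartesian_pair neq_ss'.
have := pullback_fibre_size hom_a hom_b pb (k := i).
have := pushout_hits (claw s) (claw s') po le_in; rewrite !hits_fibre_size.
have := one_sided _ _ neq_ss'; have := one_sided _ _ neq_s's.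
move: ns1 ns'1; move: (fibre_size _ _ i) (fibre_size (m s') _ i) => cs cs'; lia.
Qed.

Lemma strongly_biCartesian_BC2 i : 0 < i <= n -> forall s s',
  ~~ (in_image m f s i.-1 && in_image m f s i) ->
  ~~ (in_image m f s' i.-1 && in_image m f s' i) -> s = s'.
Proof.
move=> i_range s s'; rewrite !in_imageE !negb_and.
case: (eqVneq s s') => // neq_ss' miss miss'; exfalso.
have neq_s's : s' != s by rewrite eq_sym.
have [P [a [b [hom_a hom_b _ po]]]] := strongly_biCartesian_pair neq_ss'.
have [P' [a' [b' [hom_a' hom_b' _ po']]]] := strongly_biCartesian_pair neq_s's.
have [gt_i0 le_in] := andP i_range.
have hits_at k := pushout_hits (claw s) (claw s') po (k := k).
case/orP: miss => miss; case/orP: miss' => miss'.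
- by move: (hits_at _ (leq_trans (leq_pred i) le_in)); rewrite (negbTE miss) (negbTE miss').
- exact (pushout_no_gap (claw s) (claw s') hom_a hom_b po i_range miss miss').
- exact (pushout_no_gap (claw s') (claw s) hom_a' hom_b' po' i_range miss' miss).
- by move: (hits_at _ le_in); rewrite (negbTE miss) (negbTE miss').
Qed.

Lemma strongly_biCartesian_compatible : compatible n m f.
Proof. by split; [apply: strongly_biCartesian_BC1|apply: strongly_biCartesian_BC2]. Qed.

End StronglyBiCartesianIsCompatible.




(* [cube_dim n m f T] encodes the fibre product of the [f t], [t \in T], over
   [[n]]: by (BC1) its block over [i] is a chain of [fibre_prod m f T i]
   elements. *)
Definition fibre_prod (S : finType) (m : S -> nat) (f : S -> nat -> nat)
    (T : {set S}) i :=
  \prod_(t in T) fibre_card m f t i.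

Definition cube_dim (S : finType) n m f (T : {set S}) :=
  lex_dim n (fibre_prod m f T).

Definition cube_map (S : finType) n m f (T T' : {set S}) :=
  lex_clamp n (fibre_prod m f T) (fibre_prod m f T').

Section Cube.
Variables (S : finType) (n : nat) (m : S -> nat) (f : S -> nat -> nat).
Hypotheses (claw : is_claw n m f) (compat : compatible n m f).
Implicit Types (T : {set S}) (s : S).
Local Notation c := (fibre_card m f).
Local Notation N := (fibre_prod m f).
Local Notation Q := (cube_dim n m f).
Local Notation q := (cube_map n m f).

Lemma fibre_prod0 i : N set0 i = 1.
Proof. by rewrite /fibre_prod big_set0. Qed.

Lemma fibre_prod1 s i : N [set s] i = c s i.
Proof. by rewrite /fibre_prod big_set1. Qed.

Lemma fibre_prodU1 s T i : s \notin T -> N (s |: T) i = c s i * N T i.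
Proof. by move=> nsT; rewrite /fibre_prod big_setU1. Qed.

Lemma fibre_prod_subset T T' i : T \subset T' -> 0 < N T' i -> 0 < N T i <= N T' i.
Proof.
move=> sub_TT'; rewrite /fibre_prod (big_setID T) /= (setIidPr sub_TT').
by rewrite muln_gt0 => /andP[-> pos_rest]; rewrite leq_pmulr.
Qed.

Lemma fibre_prod_eq0 T i : N T i = 0 -> exists2 t, t \in T & c t i = 0.
Proof.
by move/eqP; rewrite /fibre_prod prod_nat_seq_eq0 => /hasP[t _ /andP[tT /eqP]]; exists t.
Qed.

Lemma fibre_card_others_eq1 i t t' : i <= n -> c t i != 1 -> t' != t -> c t' i = 1.
Proof.
move=> le_in nt1 neq; apply/eqP; apply: contraNT neq => nt'1.
by apply/eqP; apply: (proj1 compat i le_in).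
Qed.

Lemma fibre_prod_others_eq1 T i t : i <= n -> c t i != 1 -> t \notin T -> N T i = 1.
Proof.
move=> le_in nt1 ntT; rewrite /fibre_prod big1 // => t' t'T.
by apply: fibre_card_others_eq1 le_in nt1 _; apply: contraNneq ntT => <-.
Qed.

Lemma fibre_card_eq1V T i t t' : i <= n -> t != t' -> t \notin T ->
  c t i = 1 \/ N T i = 1 /\ c t' i = 1.
Proof.
move=> le_in neq ntT; case: (eqVneq (c t i) 1) => [|nt1]; [by left|right].
split; first exact: fibre_prod_others_eq1 le_in nt1 ntT.
by apply: fibre_card_others_eq1 le_in nt1 _; rewrite eq_sym.
Qed.

Lemma compatible_gap T t t' i i' : t != t' -> t \notin T -> t' \notin T ->
  i < i' <= n -> c t i = 0 -> c t' i' = 0 ->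
  (forall j, i < j < i' -> N T j = 0) -> False.
Proof.
move=> neq ntT nt'T /andP[lt_ii' le_i'n] miss miss' gap.
have miss_at t1 j : c t1 j = 0 -> ~~ in_image m f t1 j.
  by rewrite in_imageE hits_fibre_size -fibre_cardE => ->.
have BC2 t1 : c t1 i.+1 = 0 -> t = t1.
  move=> miss1; apply: (proj2 compat i.+1); first by rewrite /= (leq_trans lt_ii').
    by rewrite /= negb_and miss_at.
  by rewrite negb_and (miss_at _ _ miss1) orbT.
case: (ltngtP i.+1 i') lt_ii' => [lt_Si'|//|eq_Si'] _.
- have /fibre_prod_eq0[t1 t1T /BC2 eq_tt1] : N T i.+1 = 0 by apply: gap; rewrite ltnSn.
  by rewrite eq_tt1 t1T in ntT.
- by move: neq; rewrite (BC2 t') ?eqxx // eq_Si'.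
Qed.

(* The largest value [f s 0] is hit by every [f s]: otherwise (BC2) fails at it. *)
Lemma common_image_point : exists2 i0, i0 <= n & forall s, hits (m s) (f s) i0.
Proof.
have [s0 _|S0] := pickP (@predT S); last by exists 0 => // s; have := S0 s.
case: (@arg_maxnP S s0 predT (fun s => f s 0)) => // sm _ max_sm.
set i0 := f sm 0 in max_sm; exists i0; first exact: (proj1 (claw sm)).
move=> s; apply/contraT => miss.
have le_fs0 : f s 0 <= i0 by apply: max_sm.
have [i0_0|gt_i0] := posnP i0.
  by move: le_fs0 (hitsPn miss (leq0n (m s))); rewrite i0_0 leqn0 => ->.
have miss_sm : ~~ hits (m sm) (f sm) i0.-1.
  apply/hitsP => -[x le_xm fx].
  by have := proj2 (claw sm) 0 x (leq0n x) le_xm; rewrite fx -/i0; lia.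
have eq_sms : sm = s.
  apply: (proj2 compat i0); rewrite ?gt_i0 ?(proj1 (claw sm)) // !in_imageE.
    by rewrite negb_and miss_sm.
  by rewrite negb_and miss orbT.
have hit_sm : hits (m sm) (f sm) i0 by apply/hitsP; exists 0.
by rewrite -eq_sms hit_sm in miss.
Qed.

Lemma cube_total_gt0 T : 0 < block_start (N T) n.+1.
Proof.
have [i0 le_i0n hit] := common_image_point.
have pos_i0 : 0 < N T i0.
  by apply: prodn_cond_gt0 => t _; rewrite fibre_cardE -hits_fibre_size.
apply: leq_trans (leq_block_start _ (le_i0n : i0 < n.+1)).
by rewrite block_startS (leq_trans pos_i0) ?leq_addl.
Qed.

Lemma cube_posP T k :
  k <= Q T -> exists i r, [/\ i <= n, r < N T i & k = pos (N T) i r].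
Proof. exact: lex_posP (cube_total_gt0 T). Qed.

Lemma cube_map_pos T T' i r : i <= n -> r < N T' i ->
  q T T' (pos (N T') i r) = pos (N T) i (minn r (N T i).-1).
Proof. exact: lex_clamp_pos. Qed.

Lemma cube_is_cube : is_cube Q q.
Proof.
split=> [T T' sub_TT'|T k|T T' T'' sub_TT' sub_T'T'' k].
- have clamp_lt i r : r < N T' i -> minn r (N T i).-1 < N T i.
    by move=> lt_r; have := fibre_prod_subset sub_TT' (leq_ltn_trans (leq0n r) lt_r); lia.
  split=> [k /cube_posP[i [r [le_in lt_r ->]]]|k k' le_kk' le_k'].
    by rewrite cube_map_pos //; apply: pos_le_dim; rewrite ?clamp_lt.
  have [i [r [le_in lt_r ek]]] := cube_posP (leq_trans le_kk' le_k').
  have [i' [r' [le_i'n lt_r' ek']]] := cube_posP le_k'.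
  move: le_kk'; rewrite ek ek' !cube_map_pos // !leq_pos ?clamp_lt //.
  by case: ltngtP => //= <-; lia.
- by case/cube_posP => i [r [le_in lt_r ->]]; rewrite /= cube_map_pos //; congr pos; lia.
- case/cube_posP => i [r [le_in lt_r ->]].
  have [pos_T' le_T'] := andP (fibre_prod_subset sub_T'T'' (leq_ltn_trans (leq0n r) lt_r)).
  have [pos_T le_T] := andP (fibre_prod_subset sub_TT' pos_T').
  by rewrite /= !cube_map_pos //; [congr pos|]; lia.
Qed.

Lemma block_start_fibre_prod0 i : block_start (N set0) i = i.
Proof. by rewrite -[RHS]block_start_const1; apply: eq_bigr => j _; apply: fibre_prod0. Qed.

Lemma block_start_fibre_prod1 s i :
  block_start (N [set s]) i = count (fun j => f s j < i) (iota 0 (m s).+1).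
Proof.
elim: i => [|i IH]; first by rewrite /block_start big_ord0 (@eq_count _ _ pred0) ?count_pred0.
by rewrite block_startS IH fibre_prod1 count_ltnS.
Qed.

Lemma cube_dim0 : Q set0 = n.
Proof. by rewrite /cube_dim /lex_dim block_start_fibre_prod0. Qed.

Lemma cube_dim1 s : Q [set s] = m s.
Proof.
rewrite /cube_dim /lex_dim block_start_fibre_prod1 (@eq_in_count _ _ predT).
  by rewrite count_predT size_iota.
by move=> j; rewrite mem_iota add0n => /andP[_ lt_j] /=; rewrite ltnS (proj1 (claw s)) // -ltnS.
Qed.

Lemma cube_map0_set1 s : eqon (m s) (q set0 [set s]) (f s).
Proof.
move=> k le_k; have := count_mono_rank (proj2 (claw s)) le_k.
rewrite -!block_start_fibre_prod1 => /(block_eq (proj1 (claw s) k le_k)) block_k.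
by rewrite /cube_map /lex_clamp block_k fibre_prod0 minn0 /pos addn0 block_start_fibre_prod0.
Qed.

Section Square.
Variables (T : {set S}) (s s' : S).
Hypotheses (neq_ss' : s != s') (nsT : s \notin T) (ns'T : s' \notin T).
Let A := T :|: [set s; s'].
Let B := s |: T.
Let C := s' |: T.

Let neq_s's : s' != s. Proof. by rewrite eq_sym. Qed.

Lemma fibre_prodB i : N B i = c s i * N T i.
Proof. exact: fibre_prodU1. Qed.

Lemma fibre_prodC i : N C i = c s' i * N T i.
Proof. exact: fibre_prodU1. Qed.

Lemma fibre_prodA i : N A i = c s i * (c s' i * N T i).
Proof.
have -> : A = s |: (s' |: T) by rewrite /A setUC -setUA.
by rewrite !fibre_prodU1 // !inE negb_or neq_ss'.
Qed.

Lemma square_fibre_ne1 i : i <= n -> c s i != 1 -> N T i = 1 /\ c s' i = 1.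
Proof. by move=> le_in ns1; case: (fibre_card_eq1V le_in neq_ss' nsT) ns1 => [->|]. Qed.

Lemma fibre_prodB_T i : c s i = 1 -> N B i = N T i.
Proof. by rewrite fibre_prodB => ->; rewrite mul1n. Qed.

Lemma fibre_prodC_T i : i <= n -> c s i != 1 -> N C i = N T i.
Proof. by move=> le_in /(square_fibre_ne1 le_in)[_ s'_i]; rewrite fibre_prodC s'_i mul1n. Qed.

Lemma fibre_prodBT_gt0 i : 0 < N B i -> 0 < N T i.
Proof. by rewrite fibre_prodB muln_gt0 => /andP[]. Qed.

Lemma fibre_prodCT_gt0 i : 0 < N C i -> 0 < N T i.
Proof. by rewrite fibre_prodC muln_gt0 => /andP[]. Qed.

Lemma fibre_prodA_gt0 i : 0 < N A i -> 0 < N B i /\ 0 < N C i.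
Proof. by rewrite fibre_prodA fibre_prodB fibre_prodC !muln_gt0 => /and3P[-> -> ->]. Qed.

Let sub_TB : T \subset B. Proof. exact: subsetUr. Qed.
Let sub_TC : T \subset C. Proof. exact: subsetUr. Qed.
Let sub_BA : B \subset A. Proof. by rewrite /A setUC setSU // sub1set !inE eqxx. Qed.
Let sub_CA : C \subset A. Proof. by rewrite /A setUC setSU // sub1set !inE eqxx orbT. Qed.

Lemma square_commutes : commutes (Q A) (q B A) (q C A) (q T B) (q T C).
Proof.
have [_ _ comp] := cube_is_cube; move=> k le_k.
by rewrite -(comp _ _ _ sub_TB sub_BA k le_k); apply: comp _ _ _ sub_TC sub_CA k le_k.
Qed.

Lemma square_block_pullback i r r' : i <= n -> r < N B i -> r' < N C i ->
  minn r (N T i).-1 = minn r' (N T i).-1 ->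
  [/\ maxn r r' < N A i, minn (maxn r r') (N B i).-1 = r,
      minn (maxn r r') (N C i).-1 = r' &
      forall p, p < N A i -> minn p (N B i).-1 = r -> minn p (N C i).-1 = r' ->
        p = maxn r r'].
Proof.
move=> le_in lt_r lt_r' eq_min.
have [s_i|[T_i s'_i]] := fibre_card_eq1V le_in neq_ss' nsT.
  have A_C : N A i = N C i by rewrite fibre_prodA fibre_prodC s_i mul1n.
  rewrite A_C fibre_prodB_T // fibre_prodC; rewrite fibre_prodB_T // in lt_r.
  by apply: minn_pred_pullback; rewrite -?fibre_prodC.
have C_T : N C i = N T i by rewrite fibre_prodC s'_i mul1n.
have A_B : N A i = N B i by rewrite fibre_prodA fibre_prodB s'_i mul1n.
rewrite A_B C_T fibre_prodB maxnC; rewrite C_T in lt_r'; rewrite fibre_prodB in lt_r.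
have [lt_max clamp_r' clamp_r unique] := minn_pred_pullback lt_r' lt_r (esym eq_min).
by split=> // p lt_p eq_r eq_r'; apply: unique.
Qed.

Definition pullback_glue (u v : nat -> nat) x :=
  pos (N A) (block n (N B) (u x))
    (maxn (offset n (N B) (u x)) (offset n (N C) (v x))).

Section PullbackCone.
Variables (X : nat) (u v : nat -> nat).
Hypotheses (hom_u : is_hom X (Q B) u) (hom_v : is_hom X (Q C) v).
Hypothesis cone : eqon X (q T B \o u) (q T C \o v).

Lemma cone_pos x : x <= X -> exists i r r',
  [/\ i <= n, r < N B i, r' < N C i, u x = pos (N B) i r & v x = pos (N C) i r'] /\
  minn r (N T i).-1 = minn r' (N T i).-1.
Proof.
move=> le_x.
have [i [r [le_in lt_r eu]]] := cube_posP (proj1 hom_u x le_x).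
have [i' [r' [le_i'n lt_r' ev]]] := cube_posP (proj1 hom_v x le_x).
have pos_T := fibre_prodBT_gt0 (leq_ltn_trans (leq0n r) lt_r).
have pos_T' := fibre_prodCT_gt0 (leq_ltn_trans (leq0n r') lt_r').
have := cone le_x; rewrite /= eu ev !cube_map_pos //.
by case/pos_inj; rewrite ?minn_pred_lt // => eq_ii' eq_min; subst i'; exists i, r, r'.
Qed.

Lemma pullback_glue_pos x i r r' : i <= n -> r < N B i -> r' < N C i ->
  u x = pos (N B) i r -> v x = pos (N C) i r' ->
  pullback_glue u v x = pos (N A) i (maxn r r').
Proof. by move=> le_in lt_r lt_r' eu ev; rewrite /pullback_glue eu ev !offset_pos ?block_pos. Qed.

Lemma is_hom_pullback_glue : is_hom X (Q A) (pullback_glue u v).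
Proof.
split=> [x le_x|x y le_xy le_y].
  have [i [r [r' [[le_in lt_r lt_r' eu ev] eq_min]]]] := cone_pos le_x.
  have [lt_max _ _ _] := square_block_pullback le_in lt_r lt_r' eq_min.
  by rewrite (pullback_glue_pos le_in lt_r lt_r' eu ev) pos_le_dim.
have [i [r [r' [[le_in lt_r lt_r' eu ev] eq_min]]]] := cone_pos (leq_trans le_xy le_y).
have [j [p [p' [[le_jn lt_p lt_p' eu' ev'] eq_min']]]] := cone_pos le_y.
have [lt_max _ _ _] := square_block_pullback le_in lt_r lt_r' eq_min.
have [lt_max' _ _ _] := square_block_pullback le_jn lt_p lt_p' eq_min'.
have := proj2 hom_u x y le_xy le_y; have := proj2 hom_v x y le_xy le_y.
rewrite (pullback_glue_pos le_in lt_r lt_r' eu ev) (pullback_glue_pos le_jn lt_p lt_p' eu' ev').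
rewrite eu ev eu' ev' !leq_pos //; case: ltngtP => //= _; lia.
Qed.

Lemma pullback_glueB : eqon X (q B A \o pullback_glue u v) u.
Proof.
move=> x le_x; have [i [r [r' [[le_in lt_r lt_r' eu ev] eq_min]]]] := cone_pos le_x.
have [lt_max glue_r _ _] := square_block_pullback le_in lt_r lt_r' eq_min.
by rewrite /= (pullback_glue_pos le_in lt_r lt_r' eu ev) cube_map_pos // glue_r eu.
Qed.

Lemma pullback_glueC : eqon X (q C A \o pullback_glue u v) v.
Proof.
move=> x le_x; have [i [r [r' [[le_in lt_r lt_r' eu ev] eq_min]]]] := cone_pos le_x.
have [lt_max _ glue_r' _] := square_block_pullback le_in lt_r lt_r' eq_min.
by rewrite /= (pullback_glue_pos le_in lt_r lt_r' eu ev) cube_map_pos // glue_r' ev.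
Qed.

Lemma pullback_glue_unique w : is_hom X (Q A) w ->
  eqon X (q B A \o w) u -> eqon X (q C A \o w) v -> eqon X (pullback_glue u v) w.
Proof.
move=> hom_w wB wC x le_x.
have [i [r [r' [[le_in lt_r lt_r' eu ev] eq_min]]]] := cone_pos le_x.
have [_ _ _ unique] := square_block_pullback le_in lt_r lt_r' eq_min.
have [j [p [le_jn lt_p ew]]] := cube_posP (proj1 hom_w x le_x).
have [pos_B pos_C] := fibre_prodA_gt0 (leq_ltn_trans (leq0n p) lt_p).
have := wB x le_x; have := wC x le_x.
rewrite /= ew !cube_map_pos // eu ev.
case/pos_inj; rewrite ?minn_pred_lt // => eq_ji eq_r'; subst j.
case/pos_inj; rewrite ?minn_pred_lt // => _ eq_r.
by rewrite (pullback_glue_pos le_in lt_r lt_r' eu ev) (unique p).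
Qed.

End PullbackCone.

Lemma square_pullback : is_pullback (Q A) (Q B) (Q C) (Q T) (q B A) (q C A) (q T B) (q T C).
Proof.
split=> [|X u v hom_u hom_v cone]; first exact: square_commutes.
exists (pullback_glue u v); split.
- exact: is_hom_pullback_glue.
- exact: pullback_glueB.
- exact: pullback_glueC.
- exact: pullback_glue_unique.
Qed.

(* Over a block [i] with [c s i = 1] the map [q T B] is bijective, otherwise
   (BC1) makes [q T C] bijective there; glue [u] or [v] accordingly. *)
Definition pushout_glue (u v : nat -> nat) k :=
  let i := block n (N T) k in let r := offset n (N T) k in
  if c s i == 1 then u (pos (N B) i r) else v (pos (N C) i r).

Section PushoutCocone.
Variables (X : nat) (u v : nat -> nat).
Hypotheses (hom_u : is_hom (Q B) X u) (hom_v : is_hom (Q C) X v).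
Hypothesis cocone : eqon (Q A) (u \o q B A) (v \o q C A).

Lemma pushout_glue_pos i r : i <= n -> r < N T i -> pushout_glue u v (pos (N T) i r) =
  if c s i == 1 then u (pos (N B) i r) else v (pos (N C) i r).
Proof. by move=> le_in lt_r; rewrite /pushout_glue block_pos ?offset_pos. Qed.

Lemma cocone_pos i p : i <= n -> p < N A i ->
  u (pos (N B) i (minn p (N B i).-1)) = v (pos (N C) i (minn p (N C i).-1)).
Proof.
move=> le_in lt_p; have [pos_B pos_C] := fibre_prodA_gt0 (leq_ltn_trans (leq0n p) lt_p).
by have := cocone (pos_le_dim le_in lt_p); rewrite /= !cube_map_pos.
Qed.

Lemma leq_u_pos i r j p : i <= n -> j <= n -> r < N B i -> p < N B j ->
  (i < j) || (i == j) && (r <= p) -> u (pos (N B) i r) <= u (pos (N B) j p).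
Proof.
move=> le_in le_jn lt_r lt_p lex.
by apply: (proj2 hom_u); [rewrite leq_pos|apply: pos_le_dim].
Qed.

Lemma leq_v_pos i r j p : i <= n -> j <= n -> r < N C i -> p < N C j ->
  (i < j) || (i == j) && (r <= p) -> v (pos (N C) i r) <= v (pos (N C) j p).
Proof.
move=> le_in le_jn lt_r lt_p lex.
by apply: (proj2 hom_v); [rewrite leq_pos|apply: pos_le_dim].
Qed.

(* Across a jump from block [i] to block [i'], [u] and [v] are compared
   through a point of [Q A] in block [i] or [i']; if neither block meets
   [Q A], (BC2) fails in between. *)
Lemma pushout_glue_cross_uv i r i' r' : i < i' -> i' <= n -> r < N T i -> r' < N T i' ->
  (forall j, i < j < i' -> N T j = 0) -> c s i = 1 -> c s i' != 1 ->
  u (pos (N B) i r) <= v (pos (N C) i' r').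
Proof.
move=> lt_ii' le_i'n lt_r lt_r' gap s_i ns_i'.
have le_in := leq_trans (ltnW lt_ii') le_i'n.
have [T_i' s'_i'] := square_fibre_ne1 le_i'n ns_i'.
have B_i := fibre_prodB_T s_i.
have C_i' : N C i' = 1 by rewrite fibre_prodC s'_i' T_i'.
have {lt_r'} -> : r' = 0 by move: lt_r'; rewrite T_i'; case: r'.
case: (posnP (c s i')) => [miss_i'|hit_i'].
- case: (posnP (c s' i)) => [miss'_i|hit'_i].
    by case: (compatible_gap neq_s's ns'T nsT _ miss'_i miss_i' gap); rewrite lt_ii'.
  have A_i : N A i = c s' i * N T i by rewrite fibre_prodA s_i mul1n.
  have pos_C : 0 < N C i by rewrite fibre_prodC muln_gt0 hit'_i (leq_ltn_trans (leq0n r)).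
  have lt_p : (N A i).-1 < N A i by rewrite ltn_predL A_i -fibre_prodC.
  have := cocone_pos le_in lt_p.
  have -> : minn (N A i).-1 (N B i).-1 = (N B i).-1.
    by apply/minn_idPr; rewrite B_i A_i -!subn1 leq_sub2r // leq_pmull.
  move=> eq_uv; apply: (@leq_trans (u (pos (N B) i (N B i).-1))).
    by apply: leq_u_pos; rewrite // B_i; lia.
  by rewrite eq_uv; apply: leq_v_pos; rewrite ?minn_pred_lt ?C_i' ?lt_ii'.
- have lt_0A : 0 < N A i' by rewrite fibre_prodA s'_i' T_i' !muln1.
  have := cocone_pos le_i'n lt_0A; rewrite !min0n => <-.
  by apply: leq_u_pos; rewrite ?B_i ?lt_ii' // fibre_prodB T_i' muln1.
Qed.

Lemma pushout_glue_cross_vu i r i' r' : i < i' -> i' <= n -> r < N T i -> r' < N T i' ->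
  (forall j, i < j < i' -> N T j = 0) -> c s i != 1 -> c s i' = 1 ->
  v (pos (N C) i r) <= u (pos (N B) i' r').
Proof.
move=> lt_ii' le_i'n lt_r lt_r' gap ns_i s_i'.
have le_in := leq_trans (ltnW lt_ii') le_i'n.
have [T_i s'_i] := square_fibre_ne1 le_in ns_i.
have B_i' := fibre_prodB_T s_i'.
have C_i : N C i = 1 by rewrite fibre_prodC s'_i T_i.
have {lt_r} -> : r = 0 by move: lt_r; rewrite T_i; case: r.
case: (posnP (c s i)) => [miss_i|hit_i].
- case: (posnP (c s' i')) => [miss'_i'|hit'_i'].
    by case: (compatible_gap neq_ss' nsT ns'T _ miss_i miss'_i' gap); rewrite lt_ii'.
  have pos_C' : 0 < N C i' by rewrite fibre_prodC muln_gt0 hit'_i' (leq_ltn_trans (leq0n r')).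
  have lt_0A : 0 < N A i' by rewrite fibre_prodA s_i' mul1n -fibre_prodC.
  have := cocone_pos le_i'n lt_0A; rewrite !min0n => eq_uv.
  apply: (@leq_trans (v (pos (N C) i' 0))); first by apply: leq_v_pos; rewrite ?C_i ?lt_ii'.
  by rewrite -eq_uv; apply: leq_u_pos; rewrite ?B_i' ?ltnn ?eqxx // (leq_ltn_trans (leq0n r')).
- have lt_p : (N A i).-1 < N A i by rewrite ltn_predL fibre_prodA s'_i T_i !muln1.
  have := cocone_pos le_in lt_p; rewrite C_i minn0 => <-.
  by apply: leq_u_pos; rewrite ?B_i' ?lt_ii' ?minn_pred_lt // fibre_prodB T_i muln1.
Qed.

Lemma pushout_glue_step k : k < Q T -> pushout_glue u v k <= pushout_glue u v k.+1.
Proof.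
move=> lt_k.
have [i [r [le_in lt_r ek]]] := cube_posP (ltnW lt_k).
have [i' [r' [le_i'n lt_r' ek']]] := cube_posP lt_k.
have succ : pos (N T) i' r' = (pos (N T) i r).+1 by rewrite -ek -ek'.
have gap j : i < j < i' -> N T j = 0 := pos_succ_gap lt_r succ.
have := leqnSn (pos (N T) i r); rewrite -succ leq_pos // ek' ek !pushout_glue_pos //.
case/orP => [lt_ii'|/andP[/eqP eq_ii' le_rr']].
- case: (eqVneq (c s i) 1) => [s_i|ns_i]; case: (eqVneq (c s i') 1) => [s_i'|ns_i'] /=.
  + by apply: leq_u_pos; rewrite ?fibre_prodB_T ?lt_ii'.
  + exact: pushout_glue_cross_uv.
  + exact: pushout_glue_cross_vu.
  + by apply: leq_v_pos; rewrite ?fibre_prodC_T ?lt_ii'.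
- subst i'; case: (eqVneq (c s i) 1) => [s_i|ns_i] /=.
  + by apply: leq_u_pos; rewrite ?fibre_prodB_T // eqxx le_rr' orbT.
  + by apply: leq_v_pos; rewrite ?fibre_prodC_T // eqxx le_rr' orbT.
Qed.

Lemma is_hom_pushout_glue : is_hom (Q T) X (pushout_glue u v).
Proof.
apply: is_hom_step pushout_glue_step => k /cube_posP[i [r [le_in lt_r ->]]].
rewrite pushout_glue_pos //; case: (eqVneq (c s i) 1) => [s_i|ns_i] /=.
  by apply: (proj1 hom_u); apply: pos_le_dim; rewrite ?fibre_prodB_T.
by apply: (proj1 hom_v); apply: pos_le_dim; rewrite ?fibre_prodC_T.
Qed.

Lemma pushout_glueB : eqon (Q B) (pushout_glue u v \o q T B) u.
Proof.
move=> k /cube_posP[i [r [le_in lt_r ->]]] /=.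
have pos_T := fibre_prodBT_gt0 (leq_ltn_trans (leq0n r) lt_r).
rewrite cube_map_pos // pushout_glue_pos ?minn_pred_lt //.
case: (eqVneq (c s i) 1) => [s_i|ns_i] /=.
  by move: lt_r; rewrite fibre_prodB_T // => lt_r; congr (u (pos _ _ _)); lia.
have [T_i s'_i] := square_fibre_ne1 le_in ns_i.
have lt_rA : r < N A i by rewrite fibre_prodA s'_i mul1n -fibre_prodB.
have := cocone_pos le_in lt_rA; rewrite fibre_prodC s'_i T_i !minn0 => <-.
by congr (u (pos _ _ _)); lia.
Qed.

Lemma pushout_glueC : eqon (Q C) (pushout_glue u v \o q T C) v.
Proof.
move=> k /cube_posP[i [r [le_in lt_r ->]]] /=.
have pos_T := fibre_prodCT_gt0 (leq_ltn_trans (leq0n r) lt_r).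
rewrite cube_map_pos // pushout_glue_pos ?minn_pred_lt //.
case: (eqVneq (c s i) 1) => [s_i|ns_i] /=.
  have lt_rA : r < N A i by rewrite fibre_prodA s_i mul1n -fibre_prodC.
  have := cocone_pos le_in lt_rA; rewrite fibre_prodB_T // => ->.
  by congr (v (pos _ _ _)); lia.
have [T_i _] := square_fibre_ne1 le_in ns_i.
by move: lt_r; rewrite fibre_prodC_T // T_i ltnS leqn0 => /eqP->.
Qed.

Lemma pushout_glue_unique w :
  eqon (Q B) (w \o q T B) u -> eqon (Q C) (w \o q T C) v -> eqon (Q T) (pushout_glue u v) w.
Proof.
move=> wB wC k /cube_posP[i [r [le_in lt_r ->]]].
have clamp_r : minn r (N T i).-1 = r by lia.
rewrite pushout_glue_pos //; case: (eqVneq (c s i) 1) => [s_i|ns_i] /=.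
  have lt_rB : r < N B i by rewrite fibre_prodB_T.
  by have := wB _ (pos_le_dim le_in lt_rB); rewrite /= cube_map_pos // clamp_r => ->.
have lt_rC : r < N C i by rewrite fibre_prodC_T.
by have := wC _ (pos_le_dim le_in lt_rC); rewrite /= cube_map_pos // clamp_r => ->.
Qed.

End PushoutCocone.

Lemma square_pushout : is_pushout (Q A) (Q B) (Q C) (Q T) (q B A) (q C A) (q T B) (q T C).
Proof.
split=> [|X u v hom_u hom_v cocone]; first exact: square_commutes.
exists (pushout_glue u v); split.
- exact: is_hom_pushout_glue.
- exact: pushout_glueB.
- exact: pushout_glueC.
- by move=> w _; apply: pushout_glue_unique.
Qed.

End Square.
End Cube.

Lemma compatible_strongly_biCartesian (S : finType) n (m : S -> nat) f :
  is_claw n m f -> compatible n m f -> strongly_biCartesian n m f.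
Proof.
move=> claw compat; exists (cube_dim n m f), (cube_map n m f); split.
- exact: cube_is_cube.
- by move=> T s s' *; split; [apply: square_pullback|apply: square_pushout].
- exact: cube_dim0.
- exact: cube_dim1.
- exact: cube_map0_set1.
Qed.

Theorem corollary4p1p5 (S : finType) (n : nat) (m : S -> nat)
    (f : S -> nat -> nat) :
  is_claw n m f ->
  (strongly_biCartesian n m f <-> compatible n m f).
Proof.
move=> claw; split; first exact: strongly_biCartesian_compatible.
exact: compatible_strongly_biCartesian.
Qed.
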